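(* Let $G$ be a Polish group. Every openly Haar null subset $A\subseteq G$ is contained in a $G_\delta$ set that is Haar null.
   Context: A Polish group is a topological group whose topology is separable and completely metrizable. A set $A\subseteq G$ is Haar null if there are a Borel set $B\supseteq A$ and a Borel probability measure $\mu$ on $G$ with $\mu(gBh)=0$ for all $g,h\in G$. A set $A\subseteq G$ is openly Haar null if there is a Borel probability measure $\mu$ on $G$ such that for every $\varepsilon>0$ there is an open set $U\supseteq A$ with $\mu(gUh)<\varepsilon$ for all $g,h\in G$. *)

From HB Require Import structures.
From mathcomp Require Import all_boot all_order all_algebra.
From mathcomp Require Import all_classical all_reals all_analysis borel_hierarchy.
Set Implicit Arguments. Unset Strict Implicit. Unset Printing Implicit Defensive.
Import Order.TTheory GRing.Theory Num.Theory.
Import numFieldNormedType.Exports.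
Local Open Scope classical_set_scope.
Local Open Scope ring_scope.

Definition topological_group (T : topologicalType)
  (mul : T -> T -> T) (inv : T -> T) (one : T) : Prop :=
  [/\ (forall x y z, mul x (mul y z) = mul (mul x y) z),
      (forall x, mul one x = x /\ mul x one = x),
      (forall x, mul (inv x) x = one /\ mul x (inv x) = one),
      continuous (fun p : T * T => mul p.1 p.2) &
      continuous inv].

Definition separable_space (T : topologicalType) : Prop :=
  exists2 D : set T, countable D & dense D.

Definition completely_metrizable (R : realType) (T : topologicalType) : Prop :=
  exists d : T -> T -> R,
    [/\ (forall x y, 0 <= d x y /\ (d x y = 0 <-> x = y)),
        (forall x y, d x y = d y x),
        (forall x y z, d x z <= d x y + d y z),
        (forall U : set T, open U <->
           (forall x, U x -> exists2 r : R, 0 < r & [set y | d x y < r] `<=` U)) &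
        (forall u : nat -> T,
           (forall e : R, 0 < e -> exists N : nat, forall m n : nat,
               (N <= m)%N -> (N <= n)%N -> d (u m) (u n) < e) ->
           exists x : T, u @ \oo --> x)].

Definition polish_group (R : realType) (T : topologicalType)
  (mul : T -> T -> T) (inv : T -> T) (one : T) : Prop :=
  [/\ topological_group mul inv one, separable_space T & completely_metrizable R T].

(* The Borel sigma-algebra on T: the sigma-algebra generated by the open sets
   (T must be pointed for the library's generated-sigma-algebra instance). *)
Notation borel T := (g_sigma_algebraType (@open T)).

Definition translate (T : Type) (mul : T -> T -> T) (g h : T) (B : set T) : set T :=
  [set mul (mul g b) h | b in B].

Definition haar_null (R : realType) (T : ptopologicalType) (mul : T -> T -> T)
  (A : set T) : Prop :=
  exists B : set (borel T),
    [/\ measurable B, A `<=` B &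
        exists mu : probability (borel T) R,
          forall g h : T, mu (translate mul g h B) = 0%E].

Definition openly_haar_null (R : realType) (T : ptopologicalType)
  (mul : T -> T -> T) (A : set T) : Prop :=
  exists mu : probability (borel T) R,
    forall eps : R, 0 < eps ->
      exists U : set T, [/\ open U, A `<=` U &
        forall g h : T, (mu (translate mul g h U) < eps%:E)%E].

From HB Require Import structures.
From mathcomp Require Import all_boot all_order all_algebra.
From mathcomp Require Import all_classical all_reals all_analysis borel_hierarchy.
Import Order.TTheory GRing.Theory Num.Theory.
Local Open Scope classical_set_scope.
Local Open Scope ring_scope.

(* Pick open sets U_n containing A whose translates all have measure < 1/(n+1);
   their intersection B is a G_delta set containing A.  Translation by (g, h) is
   the preimage under the homeomorphism x |-> g^-1 x h^-1, so it commutes with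
   countable intersections and the translates of B are Borel; since each is
   contained in the corresponding translate of U_n, it is mu-null. *)

Section TopologicalGroupTranslates.
Context {T : topologicalType} {mul : T -> T -> T} {inv : T -> T} {one : T}.
Hypothesis TG : topological_group mul inv one.

Lemma translateE g h (B : set T) :
  translate mul g h B = (fun x => mul (mul (inv g) x) (inv h)) @^-1` B.
Proof.
case: TG => assoc unit invK _ _.
have mulKV x : mul (mul x h) (inv h) = x by rewrite -assoc (invK h).2 (unit x).2.
have mulVK x : mul (mul x (inv h)) h = x by rewrite -assoc (invK h).1 (unit x).2.
rewrite eqEsubset; split => [_ [b Bb <-]|x Bx] /=.
  by rewrite assoc mulKV assoc (invK g).1 (unit b).1.
exists (mul (mul (inv g) x) (inv h)) => //.
by rewrite assoc mulVK assoc (invK g).2 (unit x).1.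
Qed.

Lemma continuous_mull a : continuous (mul a).
Proof.
case: TG => _ _ _ mulC _ x.
exact: (@continuous_comp _ _ _ (pair a) _ x
  (cvg_pair (cvg_cst _) cvg_id) (mulC (a, x))).
Qed.

Lemma continuous_mulr b : continuous (mul^~ b).
Proof.
case: TG => _ _ _ mulC _ x.
exact: (@continuous_comp _ _ _ (pair^~ b) _ x
  (cvg_pair cvg_id (cvg_cst _)) (mulC (x, b))).
Qed.

Lemma open_translate g h (U : set T) : open U -> open (translate mul g h U).
Proof.
move=> oU; rewrite translateE; apply: open_comp => // x _.
exact: (@continuous_comp _ _ _ (mul (inv g)) (mul^~ (inv h)) x
  (continuous_mull _ _) (continuous_mulr _ _)).
Qed.

Lemma translate_bigcap I (P : set I) g h (F : I -> set T) :
  translate mul g h (\bigcap_(i in P) F i) = \bigcap_(i in P) translate mul g h (F i).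
Proof.
rewrite translateE preimage_bigcap.
by apply: eq_bigcapr => i _; rewrite translateE.
Qed.

End TopologicalGroupTranslates.

Lemma lee_invSn_eq0 (R : realType) (x : \bar R) :
  (0 <= x)%E -> (forall n : nat, (x <= (n.+1%:R)^-1%:E)%E) -> x = 0%E.
Proof.
move=> x0 xle; apply/eqP; rewrite eq_le x0 andbT.
apply/lee_addgt0Pr => e e0; rewrite add0e.
apply: (le_trans (xle (Num.truncn e^-1))).
rewrite lee_fin -[leRHS]invrK lef_pV2 ?posrE ?invr_gt0 ?ltr0n //.
exact/ltW/truncnS_gt.
Qed.

Theorem proposition4p33 (R : realType) (T : ptopologicalType)
  (mul : T -> T -> T) (inv : T -> T) (one : T)
  (HG : polish_group R mul inv one) (A : set T) :
  openly_haar_null R mul A ->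
  exists B : set T, [/\ Gdelta B, A `<=` B & haar_null R mul B].
Proof.
case: HG => TG _ _ [mu muU].
have /choice [U HU] : forall n : nat, exists U : set T, [/\ open U, A `<=` U &
    forall g h, (mu (translate mul g h U) < ((n.+1%:R : R)^-1)%:E)%E].
  by move=> n; apply: muU; rewrite invr_gt0 ltr0n.
have oU n : open (U n) by case: (HU n).
have mtU g h n : measurable (translate mul g h (U n) : set (borel T)).
  by apply: sub_sigma_algebra; exact: (open_translate TG).
exists (\bigcap_n U n); split; first by exists U.
  by move=> x Ax n _; case: (HU n) => _ /(_ x Ax).
exists (\bigcap_n U n); split => //.
  by apply: bigcapT_measurable => n; apply: sub_sigma_algebra.
exists mu => g h; apply: lee_invSn_eq0 => [|n]; first exact: measure_ge0.
have muUn : (mu (translate mul g h (U n)) < (n.+1%:R^-1)%:E)%E by case: (HU n).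
apply: le_trans (ltW muUn); apply: le_measure; rewrite ?inE.
- by rewrite (translate_bigcap TG); exact: bigcapT_measurable.
- exact: mtU.
- by rewrite (translate_bigcap TG); exact: bigcap_inf.
Qed.
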